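(* Let $\mathcal{H}$ be a supersolvable hyperplane arrangement of rank $n\geq 2$. Then the graph of regions $G(\mathcal{H})$ has a Hamiltonian cycle of even length.
   Context: A hyperplane arrangement in $\mathbb{R}^d$ is a finite set $\mathcal{H}$ of linear hyperplanes (hyperplanes through the origin). Its rank is the dimension of the span of the normal vectors of its hyperplanes. The regions of $\mathcal{H}$ are the connected components of $\mathbb{R}^d\setminus\bigcup_{H\in\mathcal{H}}H$. The graph of regions $G(\mathcal{H})$ has the regions as vertices, two regions being adjacent if and only if they are separated by exactly one hyperplane of $\mathcal{H}$. Supersolvability is defined recursively on the rank: an arrangement $\mathcal{H}$ of rank $n$ is supersolvable if either $n\leq 2$, or $n\geq 3$ and $\mathcal{H}$ is the disjoint union of two nonempty arrangements $\mathcal{H}_0$ and $\mathcal{H}_1$, where $\mathcal{H}_0$ is a supersolvable arrangement of rank $n-1$, and for any two distinct hyperplanes $H',H''\in\mathcal{H}_1$ there exists $H\in\mathcal{H}_0$ with $H'\cap H''\subseteq H$. *)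

From HB Require Import structures.
From mathcomp Require Import all_boot all_order all_algebra.
From mathcomp Require Import all_classical all_reals all_analysis.
Set Implicit Arguments. Unset Strict Implicit. Unset Printing Implicit Defensive.
Import Order.TTheory GRing.Theory Num.Theory.
Import numFieldNormedType.Exports.
Local Open Scope classical_set_scope.
Local Open Scope ring_scope.

(* Points of R^d are row vectors 'rV[R]_d (with their canonical
   normed-space topology from MathComp-Analysis). *)

Definition dotv (R : realType) (d : nat) (a x : 'rV[R]_d) : R :=
  \sum_(i < d) a 0 i * x 0 i.

Definition hyp (R : realType) (d : nat) (a : 'rV[R]_d) : set 'rV[R]_d :=
  [set x | dotv a x = 0].

(* A hyperplane arrangement: a finite list of normal vectors, all nonzero,
   defining pairwise distinct hyperplanes (so it is a finite *set* of
   linear hyperplanes). *)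
Definition arrangement (R : realType) (d : nat) (A : seq 'rV[R]_d) : Prop :=
  (forall a, a \in A -> a != 0) /\
  (forall i j, (i < size A)%N -> (j < size A)%N ->
     hyp (nth 0 A i) = hyp (nth 0 A j) -> i = j).

Definition arr_rank (R : realType) (d : nat) (A : seq 'rV[R]_d) : nat :=
  \rank (\matrix_(i < size A) nth 0 A i).

(* Supersolvability, defined recursively on the rank as in the paper.
   "H is the disjoint union of H0 and H1" is expressed by A being a
   permutation of A0 ++ A1 (A has no repeated hyperplanes). *)
Inductive supersolvable (R : realType) (d : nat) : seq 'rV[R]_d -> Prop :=
| SS_low A : (arr_rank A <= 2)%N -> supersolvable A
| SS_step A A0 A1 :
    (3 <= arr_rank A)%N ->
    perm_eq A (A0 ++ A1) ->
    A0 != [::] -> A1 != [::] ->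
    supersolvable A0 ->
    arr_rank A0 = (arr_rank A).-1 ->
    (forall i j, (i < size A1)%N -> (j < size A1)%N -> i <> j ->
       exists2 a, a \in A0 &
         hyp (nth 0 A1 i) `&` hyp (nth 0 A1 j) `<=` hyp a) ->
    supersolvable A.

Definition arr_complement (R : realType) (d : nat) (A : seq 'rV[R]_d)
  : set 'rV[R]_d :=
  ~` (\bigcup_(a in [set a | a \in A]) hyp a).

Definition region (R : realType) (d : nat) (A : seq 'rV[R]_d)
  (C : set 'rV[R]_d) : Prop :=
  exists2 x, arr_complement A x & C = connected_component (arr_complement A) x.

Definition separates (R : realType) (d : nat) (a : 'rV[R]_d)
  (C1 C2 : set 'rV[R]_d) : Prop :=
  ((forall x, C1 x -> 0 < dotv a x) /\ (forall y, C2 y -> dotv a y < 0)) \/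
  ((forall x, C1 x -> dotv a x < 0) /\ (forall y, C2 y -> 0 < dotv a y)).

Definition adjacent (R : realType) (d : nat) (A : seq 'rV[R]_d)
  (C1 C2 : set 'rV[R]_d) : Prop :=
  count (fun a => `[< separates a C1 C2 >]) A = 1%N.

Definition hamiltonian_cycle (R : realType) (d : nat) (A : seq 'rV[R]_d)
  (s : seq (set 'rV[R]_d)) : Prop :=
  [/\ (3 <= size s)%N,
      (forall i, (i < size s)%N -> region A (nth set0 s i)),
      (forall C, region A C -> exists2 i, (i < size s)%N & nth set0 s i = C),
      (forall i j, (i < size s)%N -> (j < size s)%N ->
         nth set0 s i = nth set0 s j -> i = j) &
      (forall i, (i < size s)%N ->
         adjacent A (nth set0 s i) (nth set0 s (i.+1 %% size s)))].

From HB Require Import structures.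
From mathcomp Require Import all_boot all_order all_algebra.
From mathcomp Require Import all_classical all_reals all_analysis.
From mathcomp Require Import ring lra zify.
Set Implicit Arguments. Unset Strict Implicit. Unset Printing Implicit Defensive.
Import Order.TTheory GRing.Theory Num.Theory.
Import numFieldNormedType.Exports.
Local Open Scope classical_set_scope.
Local Open Scope ring_scope.

(* Represent every region by one of its points: the regions of L are the
   nonempty sign patterns of the normals of L.  Induct along the supersolvable
   decomposition H = H0 + H1, choosing a direction v orthogonal to the normals
   of H0 but not to those of H1 (one suffices: any two hyperplanes of H1 meet
   inside one of H0).  For the same reason, the lines x + R v through a region
   C of H0 cross the hyperplanes of H1 in an order that does not depend on the
   line, so C is cut into a stack of #|H1| + 1 regions of H, consecutive ones
   adjacent, the bottom (resp. top) ones over adjacent regions of H0 being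
   adjacent.  Going around an even Hamiltonian cycle of G(H0), traverse the
   stacks alternately upwards and downwards; as the cycle has even length this
   closes up into an even Hamiltonian cycle of G(H).  Rank 2 starts from the
   two half-spaces of a single hyperplane. *)

Lemma count_iota_lt j n : (j <= n)%N -> count (fun i => i < j)%N (iota 0 n) = j.
Proof.
case: j => [_|j ltjn]; first by rewrite (eq_count (a2 := pred0)) ?count_pred0.
rewrite -size_filter (eq_filter (a2 := fun i => i <= 0 + j)%N) //.
by rewrite filter_iota_leq // size_iota.
Qed.

Lemma map_index_uniq (T : eqType) (s : seq T) :
  uniq s -> [seq index x s | x <- s] = iota 0 (size s).
Proof.
elim: s => //= x s IH /andP[xs s_uniq]; rewrite eqxx -add1n iotaDl -IH // -map_comp.
by congr (_ :: _); apply/eq_in_map => y ys /=; case: eqP ys => // <-; rewrite (negbTE xs).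
Qed.

Lemma eq_in_count_subpred (T : eqType) (s : seq T) (p q : pred T) :
  {in s, forall x, p x -> q x} -> count p s = count q s -> {in s, p =1 q}.
Proof.
move=> pq eq_pq x xs; apply/idP/idP => [|qx]; first exact: pq.
have split_q : count q s = (count (predI p q) s + count (predD q p) s)%N.
  by rewrite -size_filter -(count_predC p) !count_filter.
have count_pq : count (predI p q) s = count p s.
  by apply: eq_in_count => y ys /=; case: (boolP (p y)) => //= /pq ->.
have : count (predD q p) s = 0%N.
  by apply/eqP; rewrite -(eqn_add2l (count p s)) addn0 -{1}count_pq -split_q eq_pq.
by move/eqP; rewrite eqn0Ngt -has_count => /hasPn/(_ x xs) /=; rewrite qx andbT negbK.
Qed.

Lemma downset_threshold (T : eqType) (disp : Order.disp_t) (D : orderType disp)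
    (s : seq T) (P : pred T) (g : T -> D) (t : D) :
  {in s &, forall a b, P a -> ~~ P b -> (g a < g b)%O} ->
  count P s = count (fun a => g a < t)%O s -> {in s, P =1 (fun a => g a < t)%O}.
Proof.
move=> Pg eq_ct; case: (boolP (has (fun a => P a && ~~ (g a < t)%O) s)).
  move=> /hasP[a as_ /andP[Pa ge_at]] x xs; symmetry; move: x xs.
  apply: eq_in_count_subpred => // b bs lt_bt; apply: contraT => nPb.
  by rewrite (lt_trans (Pg a b as_ bs Pa nPb) lt_bt) in ge_at.
move=> /hasPn no_up; apply: eq_in_count_subpred => // b bs Pb.
by have := no_up b bs; rewrite Pb negbK.
Qed.

Lemma sub_addsmx_rank2 (F : fieldType) m n (M : 'M[F]_(m, n)) (a b c : 'rV[F]_n) :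
  (\rank M <= 2)%N -> (a <= M)%MS -> (b <= M)%MS -> (c <= M)%MS ->
  a != 0 -> ~~ (b <= a)%MS -> (c <= a + b)%MS.
Proof.
move=> rankM aM bM cM a_neq0 b_out.
have abM : (a + b <= M)%MS by rewrite addsmx_sub aM bM.
have rank_ab : (2 <= \rank (a + b))%N.
  have : (a < a + b)%MS by rewrite ltmxE addsmxSl addsmx_sub submx_refl.
  by move/rank_ltmx; rewrite rank_rV a_neq0.
have : (a + b == M)%MS.
  by rewrite -(mxrank_leqif_eq abM).2 eqn_leq mxrankS //= (leq_trans rankM rank_ab).
by case/andP=> _ /(submx_trans cM).
Qed.

Section Snake.
Variables (T : Type) (x0 : T) (m K : nat) (f : nat -> nat -> T).

Definition snake_col i j := if odd i then (K.-1 - j)%N else j.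

(* The grid [f i j], [i < m], [j < K], read row by row, even rows forwards
   and odd rows backwards. *)
Definition snake : seq T :=
  [seq f (n %/ K) (snake_col (n %/ K) (n %% K)) | n <- iota 0 (m * K)].

Lemma size_snake : size snake = (m * K)%N.
Proof. by rewrite size_map size_iota. Qed.

Lemma snake_col_lt i j : (j < K)%N -> (snake_col i j < K)%N.
Proof. by rewrite /snake_col; case: odd; lia. Qed.

Lemma snake_colK i j : (j < K)%N -> snake_col i (snake_col i j) = j.
Proof. by rewrite /snake_col; case: odd; lia. Qed.

Lemma ltn_grid i j : (i < m)%N -> (j < K)%N -> (i * K + j < m * K)%N.
Proof. by move=> ltim ltjK; nia. Qed.

Lemma nth_snake i j : (i < m)%N -> (j < K)%N ->
  nth x0 snake (i * K + j) = f i (snake_col i j).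
Proof.
move=> ltim ltjK; rewrite (nth_map 0%N) ?size_iota ?ltn_grid // nth_iota ?ltn_grid //.
by rewrite add0n divnMDl ?divn_small ?addn0 ?modnMDl ?modn_small //; lia.
Qed.

Lemma grid_index n : (n < m * K)%N ->
  exists i j, [/\ (i < m)%N, (j < K)%N & n = i * K + j]%N.
Proof.
move=> ltn; have K_gt0 : (0 < K)%N by case: K ltn; rewrite ?muln0.
exists (n %/ K)%N, (n %% K)%N; split; rewrite -?divn_eq ?ltn_pmod //.
by rewrite ltn_divLR.
Qed.

Lemma snake_surj i j : (i < m)%N -> (j < K)%N ->
  exists2 n, (n < m * K)%N & nth x0 snake n = f i j.
Proof.
move=> ltim ltjK; exists (i * K + snake_col i j)%N; first by rewrite ltn_grid ?snake_col_lt.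
by rewrite nth_snake ?snake_col_lt ?snake_colK.
Qed.

Lemma snake_inj (P : T -> T -> Prop) :
  (forall i i' j j', (i < m)%N -> (i' < m)%N -> (j < K)%N -> (j' < K)%N ->
     P (f i j) (f i' j') -> i = i' /\ j = j') ->
  forall n n', (n < m * K)%N -> (n' < m * K)%N ->
  P (nth x0 snake n) (nth x0 snake n') -> n = n'.
Proof.
move=> f_inj n n' /grid_index[i [j [ltim ltjK ->]]] /grid_index[i' [j' [lti'm ltj'K ->]]].
rewrite !nth_snake //.
move=> /(f_inj _ _ _ _ ltim lti'm (snake_col_lt i ltjK) (snake_col_lt i' ltj'K)).
by move=> [<- eq_col]; rewrite -(snake_colK i ltjK) -(snake_colK i ltj'K) eq_col.
Qed.

Lemma snake_adjacent (r : T -> T -> Prop) :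
  (forall x y, r x y -> r y x) -> ~~ odd m ->
  (forall i j, (i < m)%N -> (j.+1 < K)%N -> r (f i j) (f i j.+1)) ->
  (forall i, (i < m)%N ->
     r (f i 0) (f (i.+1 %% m) 0) /\ r (f i K.-1) (f (i.+1 %% m) K.-1)) ->
  forall n, (n < m * K)%N -> r (nth x0 snake n) (nth x0 snake (n.+1 %% (m * K))).
Proof.
(* A step inside a row uses [row], a step to the next row stays in column
   [0] or [K.-1]; the last row is odd since [m] is even, so it ends in
   column [0], where the first row starts. *)
move=> r_sym m_even row col n /grid_index[i [j [ltim ltjK ->]]].
have [ltj1K|] := ltnP j.+1 K.
  rewrite modn_small -addnS ?ltn_grid // !nth_snake // /snake_col.
  case: odd; last exact: row.
  by apply: r_sym; rewrite (_ : (K.-1 - j)%N = (K.-1 - j.+1).+1); [apply: row|]; lia.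
move=> leKj1; rewrite -addnS (_ : j = K.-1); last by lia.
rewrite (_ : i * K + K.-1.+1 = i.+1 * K)%N; last by rewrite mulSn; lia.
have [lti1m|] := ltnP i.+1 m.
  rewrite modn_small ?ltn_mul2r ?lti1m ?andbT; last by lia.
  rewrite -[(i.+1 * K)%N]addn0 !nth_snake // ?(modn_small lti1m) /snake_col /=; [|lia..].
  by case: odd (col i ltim) => -[]; rewrite ?(modn_small lti1m) ?subn0 ?subnn.
move=> lemi1; have eq_i1m : i.+1 = m by lia.
rewrite eq_i1m modnn -[0%N]/(0 * K + 0)%N !nth_snake //; [|lia..].
have odd_i : odd i by move: m_even; rewrite -eq_i1m /= negbK.
by rewrite /snake_col odd_i subnn /=; have [+ _] := col i ltim; rewrite eq_i1m modnn.
Qed.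

End Snake.

Section Geometry.
Variables (R : realType) (d : nat).
Implicit Types (a b c x y z : 'rV[R]_d) (L : seq 'rV[R]_d).

Lemma dotvC a x : dotv a x = dotv x a.
Proof. by apply: eq_bigr => i _; rewrite mulrC. Qed.

Lemma dotvD a x y : dotv a (x + y) = dotv a x + dotv a y.
Proof. by rewrite /dotv -big_split; apply: eq_bigr => i _; rewrite mxE mulrDr. Qed.

Lemma dotvZ a x (k : R) : dotv a (k *: x) = k * dotv a x.
Proof. by rewrite /dotv mulr_sumr; apply: eq_bigr => i _; rewrite mxE mulrCA. Qed.

Lemma dotvN a x : dotv a (- x) = - dotv a x.
Proof. by rewrite -scaleN1r dotvZ mulN1r. Qed.

Lemma dotvB a x y : dotv a (x - y) = dotv a x - dotv a y.
Proof. by rewrite dotvD dotvN. Qed.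

Lemma dotvDl a b x : dotv (a + b) x = dotv a x + dotv b x.
Proof. by rewrite dotvC dotvD -!(dotvC x). Qed.

Lemma dotvZl a x (k : R) : dotv (k *: a) x = k * dotv a x.
Proof. by rewrite dotvC dotvZ dotvC. Qed.

Lemma dotv_mull a (u : 'M[R]_1) x : dotv (u *m a) x = u 0 0 * dotv a x.
Proof. by rewrite -dotvZl; apply: eq_bigr => i _; rewrite !mxE big_ord1. Qed.

Lemma dotv_self_gt0 a : a != 0 -> 0 < dotv a a.
Proof.
have sq_ge0 i : 0 <= a 0 i * a 0 i by rewrite -expr2 sqr_ge0.
move=> a_neq0; rewrite lt_def sumr_ge0 ?andbT //; apply: contra a_neq0.
rewrite /dotv psumr_eq0 // => /allP a_eq0; apply/eqP/rowP => i.
by rewrite mxE; apply/eqP; rewrite -[_ == _]orbb -mulf_eq0; exact: a_eq0 (mem_index_enum _).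
Qed.

Lemma dotv_continuous a : continuous (dotv a).
Proof.
apply: continuous_big => [|i _ x]; first exact: add_continuous.
by apply: (cvgM (F := nbhs x)); [exact: cvg_cst | exact: coord_continuous].
Qed.

Lemma hypZ a (k : R) : k != 0 -> hyp (k *: a) = hyp a.
Proof.
move=> k_neq0; apply/seteqP; split => x; rewrite /hyp /= dotvZl.
  by move/eqP; rewrite mulf_eq0 (negbTE k_neq0) => /eqP.
by move->; rewrite mulr0.
Qed.

(* [a] is proportional to [b] because [y - (<b,y>/<b,b>) b] lies in [hyp b]. *)
Lemma hyp_subset_eq a b : a != 0 -> b != 0 -> hyp b `<=` hyp a -> hyp a = hyp b.
Proof.
move=> a_neq0 b_neq0 sba; have bb_neq0 := lt0r_neq0 (dotv_self_gt0 b_neq0).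
pose k := dotv a b / dotv b b.
have dotv_a y : dotv a y = k * dotv b y.
  have /sba : hyp b (y - (dotv b y / dotv b b) *: b).
    by rewrite /hyp /= dotvB dotvZ mulfVK ?subrr.
  rewrite /hyp /= dotvB dotvZ => /eqP; rewrite subr_eq0 => /eqP ->.
  by rewrite /k mulrAC (dotvC a) [RHS]mulrC mulrA.
have k_neq0 : k != 0.
  by apply: contraNneq (lt0r_neq0 (dotv_self_gt0 a_neq0)) => k0; rewrite dotv_a k0 mul0r.
apply/seteqP; split => y; rewrite /hyp /= dotv_a; last by move->; rewrite mulr0.
by move/eqP; rewrite mulf_eq0 (negbTE k_neq0) => /eqP.
Qed.

Definition avoids L x := all (fun a => dotv a x != 0) L.
Definition same_side L x y := all (fun a => (0 < dotv a x) == (0 < dotv a y)) L.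
Definition nsep L x y := count (fun a => (0 < dotv a x) != (0 < dotv a y)) L.
Definition cell L x : set 'rV[R]_d := [set y | avoids L y /\ same_side L x y].

Lemma arr_complementE L : arr_complement L = [set y | avoids L y].
Proof.
apply/seteqP; split => y /=.
  by move=> L_y; apply/allP => a aL; apply/eqP => ay0; apply: L_y; exists a.
by move=> /allP L_y [a /= aL]; apply/eqP; exact: L_y.
Qed.

Lemma same_side_sym L x y : same_side L x y -> same_side L y x.
Proof. by move=> /allP xy; apply/allP => a aL; rewrite eq_sym xy. Qed.

Lemma same_side_trans L x y z : same_side L x y -> same_side L y z -> same_side L x z.
Proof. by move=> /allP xy /allP yz; apply/allP => a aL; rewrite (eqP (xy a aL)) yz. Qed.

Lemma cell_id L x : avoids L x -> cell L x x.
Proof. by split => //; apply/allP. Qed.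

Lemma eq_cell L x y : same_side L x y -> cell L x = cell L y.
Proof.
move=> xy; apply/seteqP; split => z [Lz sz]; split => //.
  exact: same_side_trans (same_side_sym xy) sz.
exact: same_side_trans xy sz.
Qed.

Lemma sign_convex (p q t : R) : p != 0 -> q != 0 -> (0 < p) = (0 < q) ->
  0 <= t <= 1 -> p + t * (q - p) != 0 /\ (0 < p + t * (q - p)) = (0 < p).
Proof.
move=> p_neq0 q_neq0 pq /andP[t_ge0 t_le1].
have [p_gt0|p_le0] := ltP 0 p.
  have q_gt0 : 0 < q by rewrite -pq.
  have s_gt0 : 0 < p + t * (q - p) by nra.
  by rewrite s_gt0 gt_eqF.
have p_lt0 : p < 0 by rewrite lt_neqAle p_neq0.
have q_lt0 : q < 0 by rewrite lt_neqAle q_neq0 /= leNgt -pq -leNgt.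
have s_lt0 : p + t * (q - p) < 0 by nra.
by rewrite lt_eqF // (lt_gtF s_lt0).
Qed.

Lemma cell_convex L x y z (t : R) :
  cell L x y -> cell L x z -> 0 <= t <= 1 -> cell L x (y + t *: (z - y)).
Proof.
move=> [/allP Ly /allP xy] [/allP Lz /allP xz] t01.
have sign a : a \in L -> dotv a (y + t *: (z - y)) != 0 /\
    (0 < dotv a (y + t *: (z - y))) = (0 < dotv a y).
  move=> aL; rewrite dotvD dotvZ dotvB; apply: sign_convex => //;
    [exact: Ly | exact: Lz | by rewrite -(eqP (xy a aL)) (eqP (xz a aL))].
split; apply/allP => a aL; have [ne0 same] := sign a aL; first exact: ne0.
by rewrite same; exact: xy.
Qed.

Lemma cell_connected L x : avoids L x -> connected (cell L x).
Proof.
move=> Lx.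
have -> : cell L x = \bigcup_(z in cell L x) ((fun t => x + t *: (z - x)) @` `[0, 1]).
  apply/seteqP; split => [z xz|y [z xz [t t01 <-]]].
    by exists z => //; exists 1; [rewrite /= in_itv /= ler01 lexx | rewrite scale1r addrC subrK].
  by apply: cell_convex; [exact: cell_id | exact: xz | move: t01; rewrite /= in_itv].
apply: bigcup_connected => [|z _].
  by exists x => z _; exists 0; [rewrite /= in_itv /= lexx ler01 | rewrite scale0r addr0].
apply: connected_continuous_connected; first exact: segment_connected.
apply: continuous_subspaceT => t; apply: (cvgD (F := nbhs t)); first exact: cvg_cst.
by apply: (cvgZ (F := nbhs t)); [exact: cvg_id | exact: cvg_cst].
Qed.

(* The image of [K] under [dotv a] is an interval of [R] avoiding [0]. *)
Lemma connected_same_sign a (K : set 'rV[R]_d) x y :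
  connected K -> K `<=` [set z | dotv a z != 0] -> K x -> K y ->
  (0 < dotv a x) = (0 < dotv a y).
Proof.
move=> K_conn K_ne0 Kx Ky.
have /connected_intervalP K_itv : connected (dotv a @` K).
  apply: connected_continuous_connected K_conn _.
  exact/continuous_subspaceT/dotv_continuous.
have no_zero u w : K u -> K w -> dotv a u < 0 -> 0 < dotv a w -> False.
  move=> Ku Kw u_lt0 w_gt0.
  have [z Kz z0] : (dotv a @` K) 0.
    by apply: (K_itv (dotv a u) (dotv a w)); [exists u | exists w | rewrite !ltW].
  by have /eqP := K_ne0 z Kz.
have neg z : K z -> ~~ (0 < dotv a z) -> dotv a z < 0.
  by move=> Kz; rewrite -leNgt le_eqVlt (negbTE (K_ne0 z Kz)).
apply/idP/idP => [x_gt0|y_gt0]; apply: contraT => /neg neg_lt0.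
  by case: (no_zero y x Ky Kx (neg_lt0 Ky) x_gt0).
by case: (no_zero x y Kx Ky (neg_lt0 Kx) y_gt0).
Qed.

Lemma connected_component_cell L x :
  avoids L x -> connected_component (arr_complement L) x = cell L x.
Proof.
move=> Lx; rewrite arr_complementE; apply/seteqP; split; last first.
  by apply: connected_component_max; [exact: cell_id | by move=> y [] | exact: cell_connected].
move=> y Ky; have K_avoids := @connected_component_sub _ [set z | avoids L z] x.
split; first exact: K_avoids.
apply/allP => a aL; apply/eqP.
apply: (connected_same_sign (K := connected_component [set z | avoids L z] x)) Ky.
- exact: component_connected.
- by move=> z /K_avoids /allP; apply.
- exact: connected_component_refl.
Qed.

Lemma regionP L C : region L C <-> exists2 x, avoids L x & C = cell L x.
Proof.
split=> [[x + ->]|[x Lx ->]].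
  by rewrite {1}arr_complementE => Lx; exists x; rewrite ?connected_component_cell.
by exists x; rewrite ?connected_component_cell // arr_complementE.
Qed.

Lemma separates_cellP L a x y : a \in L -> avoids L x -> avoids L y ->
  separates a (cell L x) (cell L y) <-> (0 < dotv a x) != (0 < dotv a y).
Proof.
move=> aL Lx Ly; split.
  case=> [[/(_ x (cell_id Lx)) x_gt0 /(_ y (cell_id Ly)) y_lt0]|
          [/(_ x (cell_id Lx)) x_lt0 /(_ y (cell_id Ly)) y_gt0]].
    by rewrite x_gt0 (lt_gtF y_lt0).
  by rewrite y_gt0 (lt_gtF x_lt0).
have sign_lt0 z : avoids L z -> ~~ (0 < dotv a z) -> dotv a z < 0.
  by move=> /allP/(_ a aL) z_neq0; rewrite -leNgt le_eqVlt (negbTE z_neq0).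
have sign_cell u z : cell L u z -> (0 < dotv a z) = (0 < dotv a u).
  by move=> [_ /allP/(_ a aL)/eqP].
case: (boolP (0 < dotv a x)) => [x_gt0|x_le0] /= y_sign.
  left; split => z xz; first by rewrite (sign_cell _ _ xz).
  by apply: sign_lt0; [case: xz | rewrite (sign_cell _ _ xz)].
right; split => z xz; last by rewrite (sign_cell _ _ xz) (negPn y_sign).
by apply: sign_lt0; [case: xz | rewrite (sign_cell _ _ xz)].
Qed.

Lemma nsep_refl L x : nsep L x x = 0%N.
Proof. by elim: L => //= a L ->; rewrite eqxx. Qed.

Lemma nsepC L x y : nsep L x y = nsep L y x.
Proof. by apply: eq_count => a; rewrite eq_sym. Qed.

Lemma nsep_cat L1 L2 x y : nsep (L1 ++ L2) x y = (nsep L1 x y + nsep L2 x y)%N.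
Proof. exact: count_cat. Qed.

Lemma same_side_cat L1 L2 x y :
  same_side (L1 ++ L2) x y = same_side L1 x y && same_side L2 x y.
Proof. exact: all_cat. Qed.

(* A Hamiltonian cycle of the graph of regions of [L], each region being
   represented by one of its points. *)
Definition sign_cycle L (s : seq 'rV[R]_d) :=
  [/\ all (avoids L) s,
      forall y, avoids L y -> exists2 i, (i < size s)%N & same_side L (nth 0 s i) y,
      forall i j, (i < size s)%N -> (j < size s)%N ->
        same_side L (nth 0 s i) (nth 0 s j) -> i = j &
      forall i, (i < size s)%N -> nsep L (nth 0 s i) (nth 0 s (i.+1 %% size s)) = 1%N].

Lemma perm_sign_cycle L L' s : perm_eq L L' -> sign_cycle L s -> sign_cycle L' s.
Proof.
move=> LL' [s_avoids s_cover s_inj s_adj].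
have avoidsE x : avoids L x = avoids L' x by exact: perm_all.
have same_sideE x y : same_side L x y = same_side L' x y by exact: perm_all.
have nsepE x y : nsep L x y = nsep L' x y by exact: permP.
split.
- by under eq_all do rewrite -avoidsE.
- by move=> y; rewrite -avoidsE => /s_cover[i ? ?]; exists i; rewrite -?same_sideE.
- by move=> i j ? ?; rewrite -same_sideE; apply: s_inj.
- by move=> i ?; rewrite -nsepE; apply: s_adj.
Qed.

Lemma hamiltonian_cycle_cells L s : sign_cycle L s -> (3 <= size s)%N ->
  hamiltonian_cycle L (map (cell L) s).
Proof.
move=> [/allP s_avoids s_cover s_inj s_adj] s_ge3.
have s_avoids_nth i : (i < size s)%N -> avoids L (nth 0 s i).
  by move=> ltis; apply/s_avoids/mem_nth.
have nth_cells i : (i < size s)%N -> nth set0 (map (cell L) s) i = cell L (nth 0 s i).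
  exact: nth_map.
split; rewrite size_map //.
- by move=> i ltis; rewrite nth_cells //; apply/regionP; exists (nth 0 s i); auto.
- move=> C /regionP[y Ly ->]; have [i ltis iy] := s_cover y Ly.
  by exists i; rewrite ?nth_cells ?(eq_cell iy).
- move=> i j ltis ltjs; rewrite !nth_cells // => eq_ij; apply: s_inj => //.
  by have [] : cell L (nth 0 s i) (nth 0 s j) by rewrite eq_ij; exact/cell_id/s_avoids_nth.
- move=> i ltis; have ltis' : (i.+1 %% size s < size s)%N by rewrite ltn_mod (leq_trans _ s_ge3).
  rewrite /adjacent !nth_cells //; apply: etrans (s_adj i ltis); apply: eq_in_count => a aL /=.
  by apply/asboolP/idP => /separates_cellP; apply; auto.
Qed.

Lemma sign_mul (p q : R) : p != 0 -> q != 0 -> (0 < p * q) = ((0 < p) == (0 < q)).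
Proof.
move=> p_neq0 q_neq0; case: (ltrgt0P p) p_neq0 => p_sign // _.
  by rewrite pmulr_rgt0 //; case: (0 < q).
by rewrite nmulr_rgt0 //; case: (ltrgt0P q) q_neq0.
Qed.

Definition caps_in L0 L1 :=
  {in L1 &, forall a b, a != b -> exists2 a0, a0 \in L0 & hyp a `&` hyp b `<=` hyp a0}.

Section Lift.
Variables (A0 A1 : seq 'rV[R]_d) (v : 'rV[R]_d).
Hypothesis A0_v : {in A0, forall a, dotv a v = 0}.
Hypothesis A1_v : {in A1, forall a, dotv a v != 0}.
Hypothesis A1_uniq : uniq A1.
Hypothesis A1_caps : caps_in A0 A1.

Local Notation k := (size A1).

Definition crossing a c := - dotv a c / dotv a v.

Definition vside y a := (0 < dotv a y) == (0 < dotv a v).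

Lemma dotv_line a c (t : R) : a \in A1 ->
  dotv a (c + t *: v) = dotv a v * (t - crossing a c).
Proof. by move=> aA1; rewrite dotvD dotvZ /crossing; field; exact: A1_v. Qed.

Lemma dotv_line0 a c (t : R) : a \in A0 -> dotv a (c + t *: v) = dotv a c.
Proof. by move=> aA0; rewrite dotvD dotvZ A0_v // mulr0 addr0. Qed.

Lemma vside_line a c (t : R) : a \in A1 -> t != crossing a c ->
  dotv a (c + t *: v) != 0 /\ vside (c + t *: v) a = (crossing a c < t).
Proof.
move=> aA1 t_neq; have t_sub_neq0 : t - crossing a c != 0 by rewrite subr_eq0.
rewrite /vside dotv_line // mulf_neq0 ?A1_v // sign_mul ?A1_v // subr_gt0.
by split => //; case: (0 < dotv a v); case: (_ < t).
Qed.

Lemma vside_crossing a y : a \in A1 -> dotv a y != 0 -> vside y a = (crossing a y < 0).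
Proof.
move=> aA1 y_neq0; have : 0 != crossing a y.
  by rewrite /crossing eq_sym mulf_neq0 ?invr_neq0 ?oppr_eq0 ?A1_v.
by move=> /(vside_line aA1); rewrite scale0r addr0 => -[_ ->].
Qed.

Lemma crossing_segment a c y (l : R) :
  crossing a (c + l *: (y - c)) = crossing a c + l * (crossing a y - crossing a c).
Proof.
rewrite /crossing dotvD dotvZ dotvB.
have [->|av_neq0] := eqVneq (dotv a v) 0; first by rewrite !invr0 !mulr0 subrr mulr0 addr0.
by field.
Qed.

(* Two hyperplanes of [A1] meet inside a hyperplane of [A0], which the line
   [c + R v] does not meet. *)
Lemma crossing_inj c : avoids A0 c -> {in A1 &, injective (crossing^~ c)}.
Proof.
move=> /allP A0_c a b aA1 bA1 eq_ab; apply/eqP; apply: contraT => neq_ab.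
have [a0 a0A0 sub_a0] := A1_caps aA1 bA1 neq_ab.
have : hyp a0 (c + crossing a c *: v).
  by apply: sub_a0; split; rewrite /hyp /= dotv_line // ?eq_ab subrr mulr0.
by rewrite /hyp /= dotv_line0 // => /eqP; rewrite (negbTE (A0_c a0 a0A0)).
Qed.

(* Otherwise the crossings of [a] and [b], affine along the segment [[c, y]]
   which stays in the cell, would coincide somewhere on it. *)
Lemma crossing_order c y a b : avoids A0 c -> cell A0 c y -> a \in A1 -> b \in A1 ->
  dotv a y != 0 -> dotv b y != 0 -> vside y a -> ~~ vside y b ->
  crossing a c < crossing b c.
Proof.
move=> A0_c cy aA1 bA1 ay_neq0 by_neq0 ya yb.
have neq_ab : a != b by apply: contraNneq yb => <-.
rewrite vside_crossing // in ya; rewrite vside_crossing // -leNgt in yb.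
rewrite ltNge le_eqVlt negb_or (inj_in_eq (crossing_inj A0_c)) // eq_sym neq_ab /=.
apply/negP => lt_ba.
pose fc := crossing a c - crossing b c; pose fy := crossing a y - crossing b y.
have fc_gt0 : 0 < fc by rewrite subr_gt0.
have fy_lt0 : fy < 0 by rewrite /fy; lra.
pose l := fc / (fc - fy).
have l01 : 0 <= l <= 1.
  by rewrite divr_ge0 ?ler_pdivrMr ?mul1r; lra.
have [A0_z _] := cell_convex (cell_id A0_c) cy l01.
have := crossing_inj A0_z aA1 bA1; rewrite !crossing_segment.
have -> : crossing a c + l * (crossing a y - crossing a c) =
          crossing b c + l * (crossing b y - crossing b c).
  by apply/eqP; rewrite -subr_eq0 /l; apply/eqP; rewrite /fc /fy in fc_gt0 fy_lt0 *; field; lra.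
by move=> /(_ erefl) eq_ab; rewrite eq_ab eqxx in neq_ab.
Qed.

Definition crossings c := sort <=%R [seq crossing a c | a <- A1].

Definition crossing_rank a c := index (crossing a c) (crossings c).

Definition gap c j :=
  let cs := crossings c in
  if j == 0%N then cs`_0 - 1 else if j == k then cs`_k.-1 + 1 else (cs`_j.-1 + cs`_j) / 2.

(* [lift c j] is the point of the line [c + R v] lying beyond exactly [j] of
   its crossings with [A1]. *)
Definition lift c j := c + gap c j *: v.

Lemma size_crossings c : size (crossings c) = k.
Proof. by rewrite size_sort size_map. Qed.

Lemma crossings_sorted c : avoids A0 c -> sorted <%R (crossings c).
Proof. by move=> A0_c; rewrite sort_lt_sorted map_inj_in_uniq //; exact: crossing_inj. Qed.

Lemma mem_crossings a c : a \in A1 -> crossing a c \in crossings c.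
Proof. by move=> aA1; rewrite mem_sort; apply: map_f. Qed.

Lemma crossing_rank_lt a c : a \in A1 -> (crossing_rank a c < k)%N.
Proof. by move=> aA1; rewrite -(size_crossings c) index_mem mem_crossings. Qed.

Lemma gap_spec c j i : avoids A0 c -> (j <= k)%N -> (i < k)%N ->
  if (i < j)%N then (crossings c)`_i < gap c j else gap c j < (crossings c)`_i.
Proof.
move=> A0_c lejk ltik; have cs_sorted := crossings_sorted A0_c.
have le_cs i' : (i <= i' < k)%N -> (crossings c)`_i <= (crossings c)`_i'.
  by move=> /andP[leii' lti'k]; rewrite (lt_sorted_leq_nth 0 cs_sorted) ?inE ?size_crossings.
have ge_cs i' : (i' <= i)%N -> (crossings c)`_i' <= (crossings c)`_i.
  by move=> lei'i; rewrite (lt_sorted_leq_nth 0 cs_sorted) ?inE ?size_crossings //; lia.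
rewrite /gap /=; have [-> /=|j_neq0] := eqVneq j 0%N.
  by apply: lt_le_trans (ge_cs 0%N _); rewrite ?ltrBlDr ?ltrDl.
have [->|j_neq_k] := eqVneq j k; rewrite ?ltik.
  by apply: le_lt_trans (le_cs k.-1 _) _; rewrite ?ltrDl //; lia.
have lt_mid : (crossings c)`_j.-1 < (crossings c)`_j.
  by rewrite (lt_sorted_ltn_nth 0 cs_sorted) ?inE ?size_crossings; lia.
case: ltnP => [ltij|leji].
  by apply: le_lt_trans (le_cs j.-1 _) _; [lia | lra].
by apply: lt_le_trans (ge_cs j _); [lra | lia].
Qed.

Lemma lt_crossing_gap a c j : avoids A0 c -> a \in A1 -> (j <= k)%N ->
  (crossing a c < gap c j) = (crossing_rank a c < j)%N /\ gap c j != crossing a c.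
Proof.
move=> A0_c aA1 lejk; have := gap_spec A0_c lejk (crossing_rank_lt c aA1).
rewrite nth_index ?mem_crossings //; case: ltnP => _ gap_sign.
  by rewrite gap_sign gt_eqF.
by rewrite lt_gtF ?lt_eqF.
Qed.

Lemma lift_sign a c j : avoids A0 c -> a \in A1 -> (j <= k)%N ->
  dotv a (lift c j) != 0 /\ vside (lift c j) a = (crossing_rank a c < j)%N.
Proof.
move=> A0_c aA1 lejk; have [<- gap_neq] := lt_crossing_gap A0_c aA1 lejk.
exact: vside_line.
Qed.

Lemma dotv_lift0 a c j : a \in A0 -> dotv a (lift c j) = dotv a c.
Proof. exact: dotv_line0. Qed.

Lemma avoids_lift c j : avoids A0 c -> (j <= k)%N -> avoids (A0 ++ A1) (lift c j).
Proof.
move=> A0_c lejk; rewrite /avoids all_cat; apply/andP; split; apply/allP => a aA.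
  by rewrite dotv_lift0 //; exact: (allP A0_c).
by have [] := lift_sign A0_c aA lejk.
Qed.

Lemma perm_crossing_rank c : avoids A0 c ->
  perm_eq [seq crossing_rank a c | a <- A1] (iota 0 k).
Proof.
move=> A0_c; rewrite -(size_crossings c) -map_index_uniq; last first.
  by apply: sorted_uniq (crossings_sorted A0_c); [exact: lt_trans | exact: ltxx].
by rewrite (map_comp (index^~ _) (crossing^~ c)) perm_map // perm_sym perm_sort.
Qed.

Lemma count_vside_lift c j : avoids A0 c -> (j <= k)%N ->
  count (vside (lift c j)) A1 = j.
Proof.
move=> A0_c lejk; rewrite -[RHS](count_iota_lt lejk) -(permP (perm_crossing_rank A0_c)).
by rewrite count_map; apply: eq_in_count => a aA1; have [] := lift_sign A0_c aA1 lejk.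
Qed.

Lemma nsep_vside L x y : nsep L x y = count (fun a => vside x a != vside y a) L.
Proof.
by apply: eq_count => a; rewrite /vside; case: (0 < dotv a x); case: (0 < dotv a y);
  case: (0 < dotv a v).
Qed.

Lemma same_side_vside L x y : same_side L x y = all (fun a => vside x a == vside y a) L.
Proof.
by apply: eq_all => a; rewrite /vside; case: (0 < dotv a x); case: (0 < dotv a y);
  case: (0 < dotv a v).
Qed.

Lemma nsep_lift0 c c' j j' : nsep A0 (lift c j) (lift c' j') = nsep A0 c c'.
Proof. by apply: eq_in_count => a aA0 /=; rewrite !dotv_lift0. Qed.

Lemma same_side_lift0 c c' j j' : same_side A0 (lift c j) (lift c' j') = same_side A0 c c'.
Proof. by apply: eq_in_all => a aA0 /=; rewrite !dotv_lift0. Qed.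

Lemma nsep_lift_succ c j : avoids A0 c -> (j < k)%N ->
  nsep (A0 ++ A1) (lift c j) (lift c j.+1) = 1%N.
Proof.
move=> A0_c ltjk; rewrite nsep_cat nsep_lift0 nsep_refl add0n nsep_vside.
rewrite (eq_in_count (a2 := fun a => crossing_rank a c == j)); last first.
  move=> a aA1; have [_ ->] := lift_sign A0_c aA1 (ltnW ltjk).
  by have [_ ->] := lift_sign A0_c aA1 ltjk; rewrite ltnS; case: ltngtP.
rewrite -(count_map _ (pred1 j)) (permP (perm_crossing_rank A0_c)).
by rewrite count_uniq_mem ?iota_uniq // mem_iota ltjk.
Qed.

Lemma nsep_lift_end c c' j : avoids A0 c -> avoids A0 c' -> (j == 0%N) || (j == k) ->
  nsep (A0 ++ A1) (lift c j) (lift c' j) = nsep A0 c c'.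
Proof.
move=> A0_c A0_c' j_end; have lejk : (j <= k)%N by case/orP: j_end => /eqP->.
rewrite nsep_cat nsep_lift0 -[RHS]addn0; congr (_ + _).
rewrite nsep_vside (eq_in_count (a2 := pred0)) ?count_pred0 // => a aA1 /=.
have [_ ->] := lift_sign A0_c aA1 lejk.
have [_ ->] := lift_sign A0_c' aA1 lejk.
by case/orP: j_end => /eqP->; rewrite ?ltn0 ?crossing_rank_lt.
Qed.

Lemma lift_inj c j j' : avoids A0 c -> (j <= k)%N -> (j' <= k)%N ->
  same_side (A0 ++ A1) (lift c j) (lift c j') -> j = j'.
Proof.
move=> A0_c lejk lej'k; rewrite same_side_cat => /andP[_].
rewrite same_side_vside => /allP same.
rewrite -[LHS](count_vside_lift A0_c lejk) -[RHS](count_vside_lift A0_c lej'k).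
by apply: eq_in_count => a /same /eqP.
Qed.

Lemma lift_cover c y : avoids A0 c -> avoids (A0 ++ A1) y -> same_side A0 c y ->
  exists2 j, (j <= k)%N & same_side (A0 ++ A1) (lift c j) y.
Proof.
move=> A0_c; rewrite /avoids all_cat => /andP[A0_y /allP A1_y] cy.
pose j := count (vside y) A1; have lejk : (j <= k)%N by exact: count_size.
have vside_y : {in A1, vside y =1 fun a => crossing a c < gap c j}.
  apply: downset_threshold => [a b aA1 bA1 ya yb|].
    by apply: (crossing_order (y := y) A0_c) => //; exact: A1_y.
  transitivity (count (vside (lift c j)) A1); first by rewrite count_vside_lift.
  apply: eq_in_count => a aA1.
  by have [_ ->] := lift_sign A0_c aA1 lejk; have [->] := lt_crossing_gap A0_c aA1 lejk.
exists j => //; rewrite same_side_cat; apply/andP; split.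
  by apply: etrans cy; apply: eq_in_all => a aA0 /=; rewrite dotv_lift0.
rewrite same_side_vside; apply/allP => a aA1; have [_ ->] := lift_sign A0_c aA1 lejk.
by rewrite vside_y //; have [->] := lt_crossing_gap A0_c aA1 lejk.
Qed.

Lemma sign_cycle_lift s0 : sign_cycle A0 s0 -> ~~ odd (size s0) -> (2 <= size s0)%N ->
  (0 < k)%N -> exists s, [/\ sign_cycle (A0 ++ A1) s, ~~ odd (size s) & (4 <= size s)%N].
Proof.
move=> [/allP s0_avoids s0_cover s0_inj s0_adj] s0_even s0_ge2 k_gt0.
have A0_s0 i : (i < size s0)%N -> avoids A0 (nth 0 s0 i) by move=> ?; exact/s0_avoids/mem_nth.
pose f i j := lift (nth 0 s0 i) j.
exists (snake (size s0) k.+1 f); rewrite size_snake oddM negb_and s0_even.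
split=> //; last exact: (@leq_mul 2 2).
split; rewrite ?size_snake.
- apply/(all_nthP 0) => n; rewrite size_snake => /grid_index[i [j [lti ltj ->]]].
  by rewrite nth_snake // avoids_lift ?A0_s0 // -ltnS snake_col_lt.
- move=> y A_y; have [A0_y _] : avoids A0 y /\ avoids A1 y by apply/andP; rewrite -all_cat.
  have [i lti s0y] := s0_cover y A0_y; have [j lejk ly] := lift_cover (A0_s0 i lti) A_y s0y.
  by have [n ltn nth_n] := snake_surj 0 f lti (lejk : (j < k.+1)%N); exists n; rewrite ?nth_n.
- apply: (snake_inj (P := same_side (A0 ++ A1))) => i i' j j' lti lti' ltj ltj' /[dup] same.
  rewrite same_side_cat same_side_lift0 => /andP[/s0_inj eq_ii' _].
  have eq_i := eq_ii' lti lti'; split=> //; move: same; rewrite /f -eq_i.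
  exact: lift_inj (A0_s0 i lti) ltj ltj'.
- apply: (snake_adjacent 0 (r := fun x y => nsep (A0 ++ A1) x y = 1%N)) => //
    [x y|i j lti ltj|i lti]; first by rewrite nsepC.
    exact: nsep_lift_succ (A0_s0 i lti) ltj.
  have lti1 : (i.+1 %% size s0 < size s0)%N by rewrite ltn_mod; case: (size s0) lti.
  by rewrite /f /= !nsep_lift_end ?A0_s0 ?s0_adj ?eqxx ?orbT.
Qed.

End Lift.

Definition arr_wf L :=
  [/\ uniq L, {in L, forall a, a != 0} & {in L &, injective (@hyp R d)}].

Lemma arrangementP L : arrangement L <-> arr_wf L.
Proof.
split=> [[L_neq0 L_inj]|[L_uniq L_neq0 L_inj]].
  split=> //; last first.
    move=> a b aL bL eq_ab; rewrite -(nth_index 0 aL) -(nth_index 0 bL).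
    by congr nth; apply: L_inj; rewrite ?index_mem // !nth_index.
  apply/(uniqP 0) => i j; rewrite !inE => ltiL ltjL eq_ij.
  by apply: L_inj => //; rewrite eq_ij.
split=> // i j ltiL ltjL /L_inj eq_ij; apply/eqP; rewrite -(nth_uniq 0 ltiL ltjL L_uniq).
by apply/eqP/eq_ij; apply: mem_nth.
Qed.

Lemma perm_arr_wf L L' : perm_eq L L' -> arr_wf L -> arr_wf L'.
Proof.
move=> LL' [L_uniq L_neq0 L_inj]; rewrite /arr_wf -(perm_uniq LL').
by split=> // [a|a b]; rewrite -?(perm_mem LL'); [exact: L_neq0 | exact: L_inj].
Qed.

Lemma arr_wf_catl L1 L2 : arr_wf (L1 ++ L2) -> arr_wf L1.
Proof.
move=> [L_uniq L_neq0 L_inj]; split=> [|a aL1|a b aL1 bL1].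
- by move: L_uniq; rewrite cat_uniq => /andP[].
- by apply: L_neq0; rewrite mem_cat aL1.
- by apply: L_inj; rewrite mem_cat ?aL1 ?bL1.
Qed.

Definition arr_mx L := \matrix_(i < size L) nth 0 L i.

Lemma arr_mx_sub L a : a \in L -> (a <= arr_mx L)%MS.
Proof.
move=> aL; have ltiL : (index a L < size L)%N by rewrite index_mem.
by have := row_sub (Ordinal ltiL) (arr_mx L); rewrite rowK /= nth_index.
Qed.

Lemma exists_outside_span L0 L1 L : (arr_rank L0 < arr_rank L)%N -> {subset L <= L0 ++ L1} ->
  exists2 a1, a1 \in L1 & ~~ (a1 <= arr_mx L0)%MS.
Proof.
move=> lt_rank LL01; apply/hasP; apply: contraTT lt_rank => /hasPn L1_sub.
rewrite -leqNgt; apply: mxrankS; apply/row_subP => i; rewrite rowK.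
have := LL01 _ (mem_nth 0 (ltn_ord i)); rewrite mem_cat => /orP[/arr_mx_sub //|].
by move=> /L1_sub; rewrite negbK.
Qed.

Lemma orthogonal_direction L0 a1 : ~~ (a1 <= arr_mx L0)%MS ->
  exists2 v, {in L0, forall a, dotv a v = 0} & dotv a1 v != 0.
Proof.
rewrite submxE => a1_coker_neq0.
have [j a1j_neq0] : exists j, (a1 *m cokermx (arr_mx L0)) 0 j != 0.
  apply/existsP; apply: contraR a1_coker_neq0 => /existsPn a1_coker0.
  by apply/eqP/rowP => j; rewrite [RHS]mxE; apply/eqP/negPn/a1_coker0.
pose v := \row_i cokermx (arr_mx L0) i j.
have dotvE a : dotv a v = (a *m cokermx (arr_mx L0)) 0 j.
  by rewrite /dotv mxE; apply: eq_bigr => i _; rewrite mxE.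
exists v => [a aL0|]; last by rewrite dotvE.
have ltiL : (index a L0 < size L0)%N by rewrite index_mem.
have := row_mul (Ordinal ltiL) (arr_mx L0) (cokermx (arr_mx L0)).
by rewrite mulmx_coker row0 rowK /= nth_index // dotvE => <-; rewrite mxE.
Qed.

(* If [a] were parallel to [v], then [hyp a] would lie in the hyperplane of
   [L0] containing [hyp a `&` hyp a1], contradicting distinctness. *)
Lemma caps_in_dotv_neq0 L0 L1 v a1 : arr_wf (L0 ++ L1) -> caps_in L0 L1 ->
  {in L0, forall a, dotv a v = 0} -> a1 \in L1 -> dotv a1 v != 0 ->
  {in L1, forall a, dotv a v != 0}.
Proof.
move=> [L_uniq L_neq0 L_inj] caps L0_v a1L1 a1v_neq0 a aL1; apply/eqP => av0.
have neq_aa1 : a != a1 by apply: contraNneq a1v_neq0 => <-; rewrite av0.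
have [a0 a0L0 sub_a0] := caps a a1 aL1 a1L1 neq_aa1.
have sub_a : hyp a `<=` hyp a0.
  move=> x ax; pose t := - dotv a1 x / dotv a1 v.
  have : hyp a0 (x + t *: v).
    by apply: sub_a0; split; rewrite /hyp /= dotvD dotvZ ?av0 ?mulr0 ?addr0 // /t; field.
  by rewrite /hyp /= dotvD dotvZ L0_v // mulr0 addr0.
have a0L : a0 \in L0 ++ L1 by rewrite mem_cat a0L0.
have aL : a \in L0 ++ L1 by rewrite mem_cat aL1 orbT.
have eq_a0a := L_inj a0 a a0L aL (hyp_subset_eq (L_neq0 a0 a0L) (L_neq0 a aL) sub_a).
by move: L_uniq; rewrite cat_uniq => /and3P[_ /hasPn/(_ a aL1)]; rewrite -eq_a0a a0L0.
Qed.

Lemma sign_cycle_extend L0 L1 a1 s0 : arr_wf (L0 ++ L1) -> caps_in L0 L1 ->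
  a1 \in L1 -> ~~ (a1 <= arr_mx L0)%MS ->
  sign_cycle L0 s0 -> ~~ odd (size s0) -> (2 <= size s0)%N ->
  exists s, [/\ sign_cycle (L0 ++ L1) s, ~~ odd (size s) & (4 <= size s)%N].
Proof.
move=> L_wf caps a1L1 a1_out s0_cycle s0_even s0_ge2.
have [v L0_v a1v_neq0] := orthogonal_direction a1_out.
have L1_v := caps_in_dotv_neq0 L_wf caps L0_v a1L1 a1v_neq0.
have [L_uniq _ _] := L_wf; move: L_uniq; rewrite cat_uniq => /and3P[_ _ L1_uniq].
apply: (sign_cycle_lift L0_v L1_v L1_uniq caps s0_cycle) => //.
by case: (L1) a1L1.
Qed.

Lemma hyp_cap_sub a b c : (c <= a + b)%MS -> hyp a `&` hyp b `<=` hyp c.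
Proof.
move=> /sub_addsmxP[[u1 u2] /= ->] x [ax bx].
by rewrite /hyp /= dotvDl !dotv_mull ax bx !mulr0 addr0.
Qed.

Lemma hyp_neq_submx a b : b != 0 -> hyp a <> hyp b -> ~~ (b <= a)%MS.
Proof.
move=> b_neq0 neq_ab; apply/negP => /sub_rVP[k eq_b]; apply: neq_ab.
have k_neq0 : k != 0 by apply: contraNneq b_neq0 => k0; rewrite eq_b k0 scale0r.
by rewrite eq_b hypZ.
Qed.

Lemma sign_cycle_single a : a != 0 -> sign_cycle [:: a] [:: a; - a].
Proof.
move=> a_neq0; have aa_gt0 := dotv_self_gt0 a_neq0.
have aNa_lt0 : dotv a (- a) < 0 by rewrite dotvN oppr_lt0.
split.
- by rewrite /= /avoids /= gt_eqF ?lt_eqF.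
- move=> y; rewrite /avoids /= andbT => ay_neq0.
  by case: (boolP (0 < dotv a y)) => ay; [exists 0%N | exists 1%N];
    rewrite // /same_side /= ?aa_gt0 ?(lt_gtF aNa_lt0) ?ay // andbT eq_sym.
- by move=> [|[|i]] [|[|j]] //; rewrite /same_side /= aa_gt0 (lt_gtF aNa_lt0).
- by move=> [|[|i]] //= _; rewrite /nsep /= aa_gt0 (lt_gtF aNa_lt0).
Qed.

Lemma sign_cycle_rank2 A : arr_wf A -> arr_rank A = 2%N ->
  exists s, [/\ sign_cycle A s, ~~ odd (size s) & (4 <= size s)%N].
Proof.
case: A => [|ax A1] A_wf rank2; first by move: (rank_leq_row (arr_mx [::])); rewrite [\rank _]rank2.
have [_ A_neq0 A_inj] := A_wf; have ax_neq0 := A_neq0 ax (mem_head _ _).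
have [a1 a1A1 a1_out] : exists2 a1, a1 \in A1 & ~~ (a1 <= arr_mx [:: ax])%MS.
  apply: (exists_outside_span (L := ax :: A1)) => //.
  by rewrite rank2 (leq_ltn_trans (rank_leq_row _)).
apply: (sign_cycle_extend (L0 := [:: ax]) A_wf _ a1A1 a1_out (sign_cycle_single ax_neq0)) => //.
move=> a b aA1 bA1 neq_ab; exists ax; first exact: mem_head.
have aA : a \in ax :: A1 by rewrite inE aA1 orbT.
have bA : b \in ax :: A1 by rewrite inE bA1 orbT.
apply/hyp_cap_sub/(@sub_addsmx_rank2 _ _ _ (arr_mx (ax :: A1))); rewrite ?arr_mx_sub ?mem_head //.
- exact: eq_leq rank2.
- exact: A_neq0.
- by apply: hyp_neq_submx; [exact: A_neq0 | move/(A_inj a b aA bA)/eqP; rewrite (negbTE neq_ab)].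
Qed.

Lemma caps_in_nth L0 L1 :
  (forall i j, (i < size L1)%N -> (j < size L1)%N -> i <> j ->
     exists2 a, a \in L0 & hyp (nth 0 L1 i) `&` hyp (nth 0 L1 j) `<=` hyp a) ->
  caps_in L0 L1.
Proof.
move=> caps a b aL1 bL1 neq_ab.
rewrite -(nth_index 0 aL1) -(nth_index 0 bL1); apply: caps; rewrite ?index_mem //.
by move/(congr1 (nth 0 L1)); rewrite !nth_index // => eq_ab; rewrite eq_ab eqxx in neq_ab.
Qed.

Lemma supersolvable_sign_cycle A : supersolvable A -> arrangement A -> (2 <= arr_rank A)%N ->
  exists s, [/\ sign_cycle A s, ~~ odd (size s) & (4 <= size s)%N].
Proof.
elim=> {A} [A rank_le2|A A0 A1 rank_ge3 perm_A _ _ _ IH rank_A0 caps] /arrangementP A_wf rank_ge2.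
  by apply: sign_cycle_rank2 => //; apply/eqP; rewrite eqn_leq rank_le2.
have A01_wf := perm_arr_wf perm_A A_wf.
have [s0 [s0_cycle s0_even s0_ge4]] :
    exists s, [/\ sign_cycle A0 s, ~~ odd (size s) & (4 <= size s)%N].
  by apply: IH; [apply/(arrangementP A0)/(arr_wf_catl A01_wf) | rewrite rank_A0; lia].
have [a1 a1A1 a1_out] : exists2 a1, a1 \in A1 & ~~ (a1 <= arr_mx A0)%MS.
  apply: (exists_outside_span (L := A)) => [|a]; first by rewrite rank_A0; lia.
  by rewrite (perm_mem perm_A).
have [s [s_cycle s_even s_ge4]] :=
  sign_cycle_extend A01_wf (caps_in_nth caps) a1A1 a1_out s0_cycle s0_even (ltnW (ltnW s0_ge4)).
by exists s; split => //; apply: perm_sign_cycle s_cycle; rewrite perm_sym.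
Qed.

End Geometry.

Theorem theorem1p1 (R : realType) (d : nat) (A : seq 'rV[R]_d) :
  arrangement A -> supersolvable A -> (2 <= arr_rank A)%N ->
  exists s : seq (set 'rV[R]_d), hamiltonian_cycle A s /\ ~~ odd (size s).
Proof.
move=> A_arr A_ss rank_ge2.
have [s [s_cycle s_even s_ge4]] := supersolvable_sign_cycle A_ss A_arr rank_ge2.
exists (map (cell A) s); rewrite size_map; split=> //.
exact: hamiltonian_cycle_cells s_cycle (ltnW s_ge4).
Qed.
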